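(* Let $\rho$ be a representation of $D^{2,2,2}$, let $\{i,j,k\}=\{1,2,3\}$, and let $n\ge1$. Then: 1. $\varphi_i(\Phi^+\rho(a^{ij}_n))=\rho(y_iA^{kj}_n)$; 2. $\varphi_j(\Phi^+\rho(a^{ij}_n))=\rho(y_jA^{kj}_n)$ for $n>1$, and $\varphi_j(\Phi^+\rho(a^{ij}_1))=\rho(y_j(y_i+y_k)A^{kj}_1)$; 3. $\varphi_k(\Phi^+\rho(y_ia^{ij}_n))=\rho(y_kA^{ji}_{n+1})$; 4. $\varphi_i(\Phi^+\rho(A^{ij}_n))=\rho(y_i(y_j+y_k)a^{ik}_n)$; 5. $\varphi_j(\Phi^+\rho(y_kA^{ij}_n))=\rho(y_j(x_k+y_i)a^{ik}_n)$; 6. $\varphi_k(\Phi^+\rho(y_jA^{ij}_n))=\rho(y_ka^{ji}_{n+1})$.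
   Context: $D^{2,2,2}$ is the modular lattice generated by $x_1,y_1,x_2,y_2,x_3,y_3$ subject only to $x_i\subseteq y_i$ ($i=1,2,3$), with a greatest element $I$ adjoined. Meet is written $ab$, join $a+b$. Atomic elements: for distinct $i,j$, let $k$ denote the third index. Define - $a^{ij}_0=I$ and $a^{ij}_n=x_i+y_ja^{jk}_{n-1}$ for $n\ge1$; - $A^{ij}_0=I$ and $A^{ij}_n=y_i+x_jA^{ki}_{n-1}$ for $n\ge1$. A representation $\rho$ of $D^{2,2,2}$ in a finite-dimensional vector space $X_0$ is a lattice morphism from $D^{2,2,2}$ to the subspace lattice of $X_0$, with $\rho(I)=X_0$. Write $X_i=\rho(x_i)\subseteq Y_i=\rho(y_i)$. Put $R=Y_1\oplus Y_2\oplus Y_3$ and $X^1_0=\{(\eta_1,\eta_2,\eta_3)\in R:\sum\eta_i=0\}$. Let $G'_i\subseteq R$ be the triples with $i$-th coordinate in $X_i$, and $H'_i\subseteq R$ the triples with $i$-th coordinate $0$. $\Phi^+\rho$ is the representation in $X^1_0$ with $\Phi^+\rho(y_i)=G'_i\cap X^1_0$, $\Phi^+\rho(x_i)=H'_i\cap X^1_0$, $\Phi^+\rho(I)=X^1_0$. The elementary map $\varphi_i:X^1_0\to X_0$ is $(\eta_1,\eta_2,\eta_3)\mapsto\eta_i$; $\varphi_i(S)$ denotes the image of a subspace $S$. *)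

From HB Require Import structures.
From mathcomp Require Import all_boot all_order all_algebra.
Set Implicit Arguments.
Unset Strict Implicit.
Unset Printing Implicit Defensive.
Import GRing.Theory.
Local Open Scope ring_scope.

(* Lattice terms over the generators x_1,x_2,x_3,y_1,y_2,y_3 and the
   adjoined top element I of D^{2,2,2}.  Indices 1,2,3 are 'I_3 = {0,1,2}. *)
Inductive term : Type :=
  | Tx of 'I_3
  | Ty of 'I_3
  | Ttop
  | Tmeet of term & term
  | Tjoin of term & term.

(* the third index k of {i,j,k} = {1,2,3}, for distinct i j *)
Definition third (i j : 'I_3) : 'I_3 := inord (3 - i - j).

Fixpoint a_ (i j : 'I_3) (n : nat) : term :=
  match n with
  | 0 => Ttop
  | m.+1 => Tjoin (Tx i) (Tmeet (Ty j) (a_ j (third i j) m))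
  end.

Fixpoint A_ (i j : 'I_3) (n : nat) : term :=
  match n with
  | 0 => Ttop
  | m.+1 => Tjoin (Ty i) (Tmeet (Tx j) (A_ (third i j) i m))
  end.

Fixpoint eval (K : fieldType) (W : vectType K) (top : {vspace W})
  (gx gy : 'I_3 -> {vspace W}) (t : term) : {vspace W} :=
  match t with
  | Tx i => gx i
  | Ty i => gy i
  | Ttop => top
  | Tmeet a b => (eval top gx gy a :&: eval top gx gy b)%VS
  | Tjoin a b => (eval top gx gy a + eval top gx gy b)%VS
  end.

(* A representation rho of D^{2,2,2} in V (X_0 = V), determined by
   X_i = rho(x_i) <= Y_i = rho(y_i). *)
Definition rho (K : fieldType) (V : vectType K) (X Y : 'I_3 -> {vspace V})
  (t : term) : {vspace V} := eval fullv X Y t.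

Notation triple V := {ffun 'I_3 -> V}.

Definition coord (K : fieldType) (V : vectType K) (i : 'I_3) :
  'Hom(triple V, V) := linfun (fun eta : triple V => eta i).

Definition sum3 (K : fieldType) (V : vectType K) : 'Hom(triple V, V) :=
  linfun (fun eta : triple V => \sum_(i < 3) eta i).

Definition Rsp (K : fieldType) (V : vectType K) (Y : 'I_3 -> {vspace V}) :
  {vspace triple V} := (\bigcap_(i < 3) (coord V i @^-1: Y i))%VS.

Definition X10 (K : fieldType) (V : vectType K) (Y : 'I_3 -> {vspace V}) :
  {vspace triple V} := (Rsp Y :&: lker (sum3 V))%VS.

Definition G' (K : fieldType) (V : vectType K) (X Y : 'I_3 -> {vspace V})
  (i : 'I_3) : {vspace triple V} := (Rsp Y :&: (coord V i @^-1: X i))%VS.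
Definition H' (K : fieldType) (V : vectType K) (Y : 'I_3 -> {vspace V})
  (i : 'I_3) : {vspace triple V} := (Rsp Y :&: lker (coord V i))%VS.

Definition PhiPlus (K : fieldType) (V : vectType K) (X Y : 'I_3 -> {vspace V})
  (t : term) : {vspace triple V} :=
  eval (X10 Y) (fun i => H' Y i :&: X10 Y)%VS (fun i => G' X Y i :&: X10 Y)%VS t.

Definition phi (K : fieldType) (V : vectType K) (i : 'I_3)
  (S : {vspace triple V}) : {vspace V} := (coord V i @: S)%VS.

From Pilot Require Import Defs.
From HB Require Import structures.
From mathcomp Require Import all_boot all_order all_algebra.
Set Implicit Arguments. Unset Strict Implicit. Unset Printing Implicit Defensive.
Import GRing.Theory.
Local Open Scope ring_scope.

(* Write [X10_at l P] for the triples of X^1_0 whose l-th coordinate lies in P.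
   The generators of Phi^+ rho are such slices (x_l gives [X10_at l 0], y_l gives
   [X10_at l (X l)]), and solving eta_i + eta_j + eta_k = 0 shows that the sums
   occurring in a^{ij}_n and A^{ij}_n are again slices, e.g.
   X10_at i 0 + X10_at j P = X10_at i (Y_k + Y_j P).  By induction,
   Phi^+ rho(a^{ij}_n) = X10_at i (rho A^{kj}_n) and
   Phi^+ rho(A^{ij}_n) = X10_at i (rho a^{ik}_n).  The images of slices under the
   phi_l are computed by solving the same equation, and the six formulas follow
   by the modular law from Y_k <= rho A^{kj}_{n+1} <= Y_j + Y_k and
   X_k <= rho a^{ik}_n. *)

Section DistinctOrd3.
Variables i j k : 'I_3.
Hypotheses (hij : i != j) (hjk : j != k) (hik : i != k).

Lemma perm_enum_ord3 : perm_eq (index_enum 'I_3) [:: i; j; k].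
Proof.
have uniq_ijk : uniq [:: i; j; k] by rewrite /= !inE negb_or hij hik hjk.
have /subset_cardP cover : #|[:: i; j; k]| = #|'I_3|.
  by rewrite (card_uniqP uniq_ijk) card_ord.
apply: uniq_perm; rewrite ?index_enum_uniq // => l.
by rewrite mem_index_enum (cover (subset_predT _)).
Qed.

Lemma ord3P l : [\/ l = i, l = j | l = k].
Proof.
have := perm_mem perm_enum_ord3 l.
rewrite mem_index_enum !inE => /esym/or3P[] /eqP ->.
- exact: Or31.
- exact: Or32.
- exact: Or33.
Qed.

Lemma big_ord3 (R : Type) (idx : R) (op : Monoid.com_law idx) (F : 'I_3 -> R) :
  \big[op/idx]_(l < 3) F l = op (F i) (op (F j) (F k)).
Proof. by rewrite (perm_big _ perm_enum_ord3) !big_cons big_nil Monoid.mulm1. Qed.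

Lemma third_distinct : third i j = k.
Proof.
have sum_ord3 : (\sum_(l < 3) l = 3)%N by rewrite !big_ord_recr big_ord0.
by rewrite /third -[X in (X - i)%N]sum_ord3 big_ord3 !addKn inord_val.
Qed.
End DistinctOrd3.

Section Triples.
Variables (K : fieldType) (V : vectType K).

Definition proj_triple (l : 'I_3) (eta : triple V) : V := eta l.
Fact proj_triple_is_linear l : linear (proj_triple l).
Proof. by move=> a x y; rewrite /proj_triple !ffunE. Qed.
HB.instance Definition _ l :=
  GRing.isLinear.Build K (triple V) V _ (proj_triple l) (proj_triple_is_linear l).

Definition sum_triple (eta : triple V) : V := \sum_(l < 3) eta l.
Fact sum_triple_is_linear : linear sum_triple.
Proof.
move=> a x y; rewrite /sum_triple scaler_sumr -big_split.
by apply: eq_bigr => l _; rewrite !ffunE.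
Qed.
HB.instance Definition _ :=
  GRing.isLinear.Build K (triple V) V _ sum_triple sum_triple_is_linear.

Lemma coordE l (eta : triple V) : Defs.coord V l eta = eta l.
Proof. exact: (lfunE (proj_triple l)). Qed.

Lemma sum3E (eta : triple V) : sum3 V eta = \sum_(l < 3) eta l.
Proof. exact: (lfunE sum_triple). Qed.

Lemma tripleDE (eta zeta : triple V) l : (eta + zeta) l = eta l + zeta l.
Proof. by rewrite !ffunE. Qed.

Lemma tripleBE (eta zeta : triple V) l : (eta - zeta) l = eta l - zeta l.
Proof. by rewrite !ffunE. Qed.

Variable Y : 'I_3 -> {vspace V}.

Lemma memRsp (eta : triple V) : (eta \in Rsp Y) = [forall l, eta l \in Y l].
Proof.
rewrite memvE; apply/subv_bigcapP/forallP => [sub l | mem l _].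
  by rewrite -coordE memv_preim memvE sub.
by rewrite -memvE -memv_preim coordE.
Qed.

Section Distinct.
Variables i j k : 'I_3.
Hypotheses (hij : i != j) (hjk : j != k) (hik : i != k).

Lemma memX10 (eta : triple V) : (eta \in X10 Y) =
  [&& eta i \in Y i, eta j \in Y j, eta k \in Y k & eta i + eta j + eta k == 0].
Proof.
rewrite memv_cap memRsp memv_ker sum3E (big_ord3 hij hjk hik) /= addrA.
apply/andP/and4P => [[/forallP mem ->] | [Yi Yj Yk ->]]; first by rewrite !mem.
by split=> //; apply/forallP => l; case: (ord3P hij hjk hik l) => ->.
Qed.

Lemma X10_coordE eta : eta \in X10 Y -> eta i = - (eta j + eta k).
Proof. by rewrite memX10 -addrA addr_eq0 => /and4P[_ _ _ /eqP]. Qed.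

Definition triple3 (u v w : V) : triple V :=
  [ffun l => if l == i then u else if l == j then v else w].

Lemma triple3_i u v w : triple3 u v w i = u.
Proof. by rewrite ffunE eqxx. Qed.

Lemma triple3_j u v w : triple3 u v w j = v.
Proof. by rewrite ffunE eq_sym (negbTE hij) eqxx. Qed.

Lemma triple3_k u v w : triple3 u v w k = w.
Proof. by rewrite ffunE eq_sym (negbTE hik) eq_sym (negbTE hjk). Qed.

Lemma memX10_triple3 u v w : (triple3 u v w \in X10 Y) =
  [&& u \in Y i, v \in Y j, w \in Y k & u + v + w == 0].
Proof. by rewrite memX10 triple3_i triple3_j triple3_k. Qed.
End Distinct.

Definition X10_at (l : 'I_3) (P : {vspace V}) : {vspace triple V} :=
  (X10 Y :&: Defs.coord V l @^-1: P)%VS.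

Lemma memX10_at l P eta : (eta \in X10_at l P) = (eta \in X10 Y) && (eta l \in P).
Proof. by rewrite memv_cap -memv_preim coordE. Qed.

Lemma X10_at_full l : X10_at l fullv = X10 Y.
Proof. by apply/vspaceP => eta; rewrite memX10_at memvf andbT. Qed.

Lemma X10_at_cap l P Q : (X10_at l P :&: X10_at l Q)%VS = X10_at l (P :&: Q).
Proof.
apply/vspaceP => eta; rewrite memv_cap !memX10_at memv_cap.
by case: (eta \in X10 Y).
Qed.

Lemma X10_at_RspE l P :
  (Rsp Y :&: (Defs.coord V l @^-1: P) :&: X10 Y)%VS = X10_at l P.
Proof.
apply/vspaceP => eta; rewrite memX10_at !memv_cap -memv_preim coordE.
by case: (eta \in Rsp Y); case: (eta \in lker _); case: (eta l \in P).
Qed.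

Section Slices.
Variables i j k : 'I_3.
Hypotheses (hij : i != j) (hjk : j != k) (hik : i != k).

Lemma X10_at0_add P : (X10_at i 0 + X10_at j P)%VS = X10_at i (Y k + (Y j :&: P)).
Proof.
apply/vspaceP => eta; apply/memv_addP/idP => [[u + [v + ->]] | ].
  rewrite !memX10_at memv0 => /andP[Xu /eqP ui0] /andP[Xv Pv].
  rewrite memvD //= tripleDE ui0 add0r (X10_coordE hij hjk hik Xv) opprD addrC.
  move: Xv; rewrite (memX10 hij hjk hik) => /and4P[_ Yvj Yvk _].
  by rewrite memv_add ?memvN // memv_cap Yvj.
rewrite memX10_at => /andP[Xeta /memv_addP[p Yp [q /memv_capP[Yq Pq] eta_i]]].
have Yeta_i : eta i \in Y i by move: Xeta; rewrite (memX10 hij hjk hik) => /and4P[].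
pose z := triple3 i j (eta i) (- q) (- p).
have Xz : z \in X10 Y.
  by rewrite (memX10_triple3 hij hjk hik) Yeta_i !memvN Yp Yq eta_i addrK subrr eqxx.
exists (eta - z); last exists z; rewrite ?subrK //.
  by rewrite memX10_at memvB //= tripleBE triple3_i subrr mem0v.
by rewrite memX10_at Xz (triple3_j hij) memvN.
Qed.

Lemma X10_at_add_cap0 P Q : (P <= Y i)%VS ->
  (X10_at i P + (X10_at j 0 :&: X10_at k Q))%VS = X10_at i (P + (Y k :&: Q)).
Proof.
move=> sPY; apply/vspaceP => eta; apply/memv_addP/idP => [[u + [v + ->]] | ].
  rewrite memv_cap !memX10_at memv0 => /andP[Xu Pu] /andP[/andP[Xv /eqP vj0] /andP[_ Qv]].
  rewrite memvD //= tripleDE (X10_coordE hij hjk hik Xv) vj0 add0r.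
  move: Xv; rewrite (memX10 hij hjk hik) => /and4P[_ _ Yvk _].
  by rewrite memv_add ?memvN // memv_cap Yvk.
rewrite memX10_at => /andP[Xeta /memv_addP[x Px [q /memv_capP[Yq Qq] eta_i]]].
have Yeta_i : eta i \in Y i by move: Xeta; rewrite (memX10 hij hjk hik) => /and4P[].
have Yiq : q \in Y i by rewrite -(addKr x q) -eta_i memvD // memvN (subvP sPY).
pose z := triple3 i j q 0 (- q).
have Xz : z \in X10 Y.
  by rewrite (memX10_triple3 hij hjk hik) Yiq mem0v memvN Yq addr0 subrr eqxx.
exists (eta - z); last exists z; rewrite ?subrK //.
  by rewrite memX10_at memvB //= tripleBE triple3_i eta_i addrK.
rewrite memv_cap !memX10_at Xz (triple3_j hij) (triple3_k hjk hik).
by rewrite memv0 eqxx memvN.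
Qed.

Lemma phi_X10_at_same P : phi i (X10_at i P) = (Y i :&: (Y j + Y k) :&: P)%VS.
Proof.
apply/vspaceP => w; apply/memv_imgP/idP => [[eta + ->] | ].
  rewrite memX10_at coordE => /andP[Xeta Peta].
  have := Xeta; rewrite (memX10 hij hjk hik) => /and4P[Yi Yj Yk _].
  rewrite !memv_cap Yi Peta andbT /= (X10_coordE hij hjk hik Xeta).
  by rewrite memvN memv_add.
rewrite !memv_cap => /andP[/andP[Yw /memv_addP[a Ya [b Yb w_ab]]] Pw].
exists (triple3 i j w (- a) (- b)); last by rewrite coordE triple3_i.
rewrite memX10_at triple3_i Pw andbT (memX10_triple3 hij hjk hik) !memvN Yw Ya Yb.
by rewrite w_ab addrAC addrK subrr eqxx.
Qed.

Lemma phi_X10_at_cap Q P :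
  phi j (X10_at k Q :&: X10_at i P) = (Y j :&: (Y i :&: P + Y k :&: Q))%VS.
Proof.
have hji : j != i by rewrite eq_sym.
apply/vspaceP => w; apply/memv_imgP/idP => [[eta + ->] | ].
  case/memv_capP; rewrite !memX10_at coordE => /andP[Xeta Qeta] /andP[_ Peta].
  have := Xeta; rewrite (memX10 hij hjk hik) => /and4P[Yi Yj Yk _].
  rewrite memv_cap Yj (X10_coordE hji hik hjk Xeta) opprD.
  by rewrite memv_add ?memvN // memv_cap ?Yi ?Yk.
rewrite memv_cap => /andP[Yw /memv_addP[p /memv_capP[Yp Pp] [q /memv_capP[Yq Qq] w_pq]]].
exists (triple3 i j (- p) w (- q)); last by rewrite coordE (triple3_j hij).
rewrite memv_cap !memX10_at (memX10_triple3 hij hjk hik) triple3_i (triple3_k hjk hik).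
by rewrite !memvN Yp Yw Yq Pp Qq w_pq addrA addNr add0r subrr eqxx.
Qed.

Lemma phi_X10_at_other P : phi j (X10_at i P) = (Y j :&: (Y i :&: P + Y k))%VS.
Proof.
have X10_atP : X10_at i P = (X10_at k fullv :&: X10_at i P)%VS.
  by rewrite X10_at_full; apply/esym/capv_idPr; exact: capvSl.
by rewrite X10_atP phi_X10_at_cap capvf.
Qed.
End Slices.
End Triples.

Lemma a_succ_distinct (i j k : 'I_3) n : i != j -> j != k -> i != k ->
  a_ i j n.+1 = Tjoin (Tx i) (Tmeet (Ty j) (a_ j k n)).
Proof. by move=> hij hjk hik; rewrite /= (third_distinct hij hjk hik). Qed.

Lemma A_succ_distinct (i j k : 'I_3) n : i != j -> j != k -> i != k ->
  A_ i j n.+1 = Tjoin (Ty i) (Tmeet (Tx j) (A_ k i n)).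
Proof. by move=> hij hjk hik; rewrite /= (third_distinct hij hjk hik). Qed.

Section Representation.
Variables (K : fieldType) (V : vectType K) (X Y : 'I_3 -> {vspace V}).
Hypothesis sXY : forall l, (X l <= Y l)%VS.

Lemma rho_meet t u : rho X Y (Tmeet t u) = (rho X Y t :&: rho X Y u)%VS.
Proof. by []. Qed.

Lemma rho_join t u : rho X Y (Tjoin t u) = (rho X Y t + rho X Y u)%VS.
Proof. by []. Qed.

Lemma rho_x l : rho X Y (Tx l) = X l. Proof. by []. Qed.
Lemma rho_y l : rho X Y (Ty l) = Y l. Proof. by []. Qed.

Lemma PhiPlus_meet t u :
  PhiPlus X Y (Tmeet t u) = (PhiPlus X Y t :&: PhiPlus X Y u)%VS.
Proof. by []. Qed.

Lemma PhiPlus_join t u :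
  PhiPlus X Y (Tjoin t u) = (PhiPlus X Y t + PhiPlus X Y u)%VS.
Proof. by []. Qed.

Lemma PhiPlus_x l : PhiPlus X Y (Tx l) = X10_at Y l 0.
Proof. by rewrite -X10_at_RspE /PhiPlus /= /H' lpreim0. Qed.

Lemma PhiPlus_y l : PhiPlus X Y (Ty l) = X10_at Y l (X l).
Proof. exact: X10_at_RspE. Qed.

Lemma PhiPlus_a n i j k : i != j -> j != k -> i != k ->
  PhiPlus X Y (a_ i j n) = X10_at Y i (rho X Y (A_ k j n)).
Proof.
elim: n i j k => [|n IHn] i j k hij hjk hik; first by rewrite X10_at_full.
have [hji hkj hki] : [/\ j != i, k != j & k != i] by rewrite !(eq_sym k) eq_sym.
rewrite (a_succ_distinct _ hij hjk hik) (A_succ_distinct _ hkj hji hki).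
rewrite PhiPlus_join PhiPlus_meet PhiPlus_x PhiPlus_y (IHn j k i hjk hki hji).
rewrite X10_at_cap (X10_at0_add Y hij hjk hik) capvA (capv_idPr (sXY j)).
by rewrite rho_join rho_meet rho_x rho_y.
Qed.

Lemma PhiPlus_A n i j k : i != j -> j != k -> i != k ->
  PhiPlus X Y (A_ i j n) = X10_at Y i (rho X Y (a_ i k n)).
Proof.
elim: n i j k => [|n IHn] i j k hij hjk hik; first by rewrite X10_at_full.
have [hkj hki] : k != j /\ k != i by rewrite !(eq_sym k).
rewrite (A_succ_distinct _ hij hjk hik) (a_succ_distinct _ hik hkj hij).
rewrite PhiPlus_join PhiPlus_meet PhiPlus_x PhiPlus_y (IHn k i j hki hij hkj).
rewrite (X10_at_add_cap0 hij hjk hik _ (sXY i)).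
by rewrite rho_join rho_meet rho_x rho_y.
Qed.

Lemma x_le_a n i j : (X i <= rho X Y (a_ i j n))%VS.
Proof. by case: n => [|n]; rewrite ?subvf //= addvSl. Qed.

Lemma A_succ_le n i j : (rho X Y (A_ i j n.+1) <= Y i + Y j)%VS.
Proof. exact/addvS/(subv_trans (capvSl _ _) (sXY j)). Qed.

Lemma A_succ2_le n i j k : i != j -> j != k -> i != k ->
  (rho X Y (A_ i j n.+2) <= Y i + Y k)%VS.
Proof.
move=> hij hjk hik; rewrite (A_succ_distinct _ hij hjk hik) rho_join rho_meet rho_y.
by rewrite subv_add addvSl addvC (subv_trans (capvSr _ _) (A_succ_le _ _ _)).
Qed.

Section Distinct.
Variables i j k : 'I_3.
Hypotheses (hij : i != j) (hjk : j != k) (hik : i != k).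
Let hji : j != i. Proof. by rewrite eq_sym. Qed.
Let hkj : k != j. Proof. by rewrite eq_sym. Qed.
Let hki : k != i. Proof. by rewrite eq_sym. Qed.

Lemma x_le_a_other n : (X k <= rho X Y (a_ i k n))%VS.
Proof.
case: n => [|n]; first exact: subvf.
rewrite (a_succ_distinct _ hik hkj hij) rho_join rho_meet rho_y.
by apply: subv_trans (addvSr _ _); rewrite subv_cap sXY x_le_a.
Qed.

Lemma phi_a_same n :
  phi i (PhiPlus X Y (a_ i j n.+1)) = rho X Y (Tmeet (Ty i) (A_ k j n.+1)).
Proof.
have sAY : (rho X Y (A_ k j n.+1) <= Y j + Y k)%VS by rewrite addvC A_succ_le.
rewrite (PhiPlus_a _ hij hjk hik) (phi_X10_at_same Y hij hjk hik).
by rewrite rho_meet rho_y -capvA (capv_idPr sAY).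
Qed.

Lemma phi_a_other n : phi j (PhiPlus X Y (a_ i j n.+1)) =
  (Y j :&: (rho X Y (A_ k j n.+1) :&: (Y i + Y k)))%VS.
Proof.
rewrite (PhiPlus_a _ hij hjk hik) (phi_X10_at_other Y hij hjk hik) (capvC (Y i)).
by rewrite vspace_modr // (A_succ_distinct _ hkj hji hki) rho_join addvSl.
Qed.

Lemma phi_a_other_succ n :
  phi j (PhiPlus X Y (a_ i j n.+2)) = rho X Y (Tmeet (Ty j) (A_ k j n.+2)).
Proof.
have sAY : (rho X Y (A_ k j n.+2) <= Y i + Y k)%VS.
  by rewrite addvC (A_succ2_le _ hkj hji hki).
by rewrite phi_a_other rho_meet rho_y (capv_idPl sAY).
Qed.

Lemma phi_a_other1 : phi j (PhiPlus X Y (a_ i j 1)) =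
  rho X Y (Tmeet (Tmeet (Ty j) (Tjoin (Ty i) (Ty k))) (A_ k j 1)).
Proof. by rewrite phi_a_other !rho_meet rho_join !rho_y (capvC (rho _ _ _)) capvA. Qed.

Lemma phi_Ya_third n : phi k (PhiPlus X Y (Tmeet (Ty i) (a_ i j n))) =
  rho X Y (Tmeet (Ty k) (A_ j i n.+1)).
Proof.
rewrite PhiPlus_meet PhiPlus_y (PhiPlus_a _ hij hjk hik) X10_at_cap.
rewrite (phi_X10_at_other Y hik hkj hij) capvA (capv_idPr (sXY i)).
by rewrite (A_succ_distinct _ hji hik hjk) rho_meet rho_join rho_meet rho_x !rho_y addvC.
Qed.

Lemma phi_A_same n : phi i (PhiPlus X Y (A_ i j n)) =
  rho X Y (Tmeet (Tmeet (Ty i) (Tjoin (Ty j) (Ty k))) (a_ i k n)).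
Proof. by rewrite (PhiPlus_A _ hij hjk hik) (phi_X10_at_same Y hij hjk hik). Qed.

Lemma phi_YA_other n : phi j (PhiPlus X Y (Tmeet (Ty k) (A_ i j n))) =
  rho X Y (Tmeet (Tmeet (Ty j) (Tjoin (Tx k) (Ty i))) (a_ i k n)).
Proof.
rewrite PhiPlus_meet PhiPlus_y (PhiPlus_A _ hij hjk hik) (phi_X10_at_cap Y hij hjk hik).
rewrite (capv_idPr (sXY k)) (capvC (Y i)) vspace_modr ?x_le_a_other //.
by rewrite !rho_meet rho_join rho_x rho_y -capvA (capvC (rho _ _ _)) addvC.
Qed.

Lemma phi_YA_third n : phi k (PhiPlus X Y (Tmeet (Ty j) (A_ i j n))) =
  rho X Y (Tmeet (Ty k) (a_ j i n.+1)).
Proof.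
rewrite PhiPlus_meet PhiPlus_y (PhiPlus_A _ hij hjk hik) (phi_X10_at_cap Y hik hkj hij).
rewrite (capv_idPr (sXY j)) (a_succ_distinct _ hji hik hjk).
by rewrite rho_meet rho_join rho_meet rho_x !rho_y addvC.
Qed.
End Distinct.
End Representation.

Unset Implicit Arguments.
Local Close Scope ring_scope.

Theorem mainTheorem10 (K : fieldType) (V : vectType K)
  (X Y : 'I_3 -> {vspace V}) (XY : forall l, (X l <= Y l)%VS)
  (i j k : 'I_3) (hij : i != j) (hjk : j != k) (hik : i != k)
  (n : nat) (hn : (1 <= n)%N) :
  (phi i (PhiPlus X Y (a_ i j n)) = rho X Y (Tmeet (Ty i) (A_ k j n)) /\
      (((1 < n)%N -> phi j (PhiPlus X Y (a_ i j n)) = rho X Y (Tmeet (Ty j) (A_ k j n)))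
      /\ phi j (PhiPlus X Y (a_ i j 1)) =
         rho X Y (Tmeet (Tmeet (Ty j) (Tjoin (Ty i) (Ty k))) (A_ k j 1))) /\
      phi k (PhiPlus X Y (Tmeet (Ty i) (a_ i j n))) = rho X Y (Tmeet (Ty k) (A_ j i n.+1)) /\
      phi i (PhiPlus X Y (A_ i j n)) =
        rho X Y (Tmeet (Tmeet (Ty i) (Tjoin (Ty j) (Ty k))) (a_ i k n)) /\
      phi j (PhiPlus X Y (Tmeet (Ty k) (A_ i j n))) =
        rho X Y (Tmeet (Tmeet (Ty j) (Tjoin (Tx k) (Ty i))) (a_ i k n)) /\
      phi k (PhiPlus X Y (Tmeet (Ty j) (A_ i j n))) = rho X Y (Tmeet (Ty k) (a_ j i n.+1))).
Proof.
case: n hn => [//|n] _.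
split; first exact: phi_a_same.
split; first split.
- by case: n => [//|n] _; apply: phi_a_other_succ.
- exact: phi_a_other1.
split; first exact: phi_Ya_third.
split; first exact: phi_A_same.
by split; [apply: phi_YA_other | apply: phi_YA_third].
Qed.
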